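(* Let $n_\text{in}\ge1$, $n_\text{out}\in\{2,3\}$, $\mathbf{W}\in\mathbb{R}^{n_\text{out}\times n_\text{in}}$, $\mathbf{b}\in\mathbb{R}^{n_\text{out}}$, $\mathbf{c}\in\mathbb{R}^{n_\text{in}}$, $\mathbf{U}=[\mathbf{u}_1\,\ldots\,\mathbf{u}_{n_\text{in}}]\in\mathbb{R}^{n_\text{in}\times n_\text{in}}$. For $r\in[0,1]$ let $\mathcal{P}(\mathbf{U})=\{\mathbf{c}+\sum_j\lambda_j\mathbf{u}_j:\lambda\in[0,1]^{n_\text{in}}\}$, $\mathcal{P}(\mathbf{U}^L_r)=\{\mathbf{c}+\lambda_1 r\mathbf{u}_1+\sum_{j\ge2}\lambda_j\mathbf{u}_j:\lambda\in[0,1]^{n_\text{in}}\}$, $\mathcal{P}(\mathbf{U}^R_r)=\{\mathbf{c}+r\mathbf{u}_1+\lambda_1(1-r)\mathbf{u}_1+\sum_{j\ge2}\lambda_j\mathbf{u}_j:\lambda\in[0,1]^{n_\text{in}}\}$, let $\mathcal{P}(\mathbf{V}),\mathcal{P}(\mathbf{V}^L_r),\mathcal{P}(\mathbf{V}^R_r)$ be their images under $\mathbf{x}\mapsto\mathbf{W}\mathbf{x}+\mathbf{b}$, and define $V_\text{red}(r)=\mathrm{Vol}(\mathcal{B}(\mathbf{V}))-\mathrm{Vol}(\mathcal{B}(\mathbf{V}^L_r)\cup\mathcal{B}(\mathbf{V}^R_r))$. Then $r=\tfrac12$ maximizes $V_\text{red}(r)$ over $r\in[0,1]$.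
   Context: For a parallelotope $\mathcal{P}\subset\mathbb{R}^{n_\text{out}}$, $\mathcal{B}(\cdot)$ denotes the smallest axis-aligned hyperrectangle containing it (the Cartesian product over coordinates of the interval between the minimal and maximal coordinate of its vertices); $\mathrm{Vol}$ is $n_\text{out}$-dimensional Lebesgue volume. *)

From HB Require Import structures.
From mathcomp Require Import all_boot all_order all_algebra.
From mathcomp Require Import all_classical all_reals all_analysis.
Set Implicit Arguments. Unset Strict Implicit. Unset Printing Implicit Defensive.
Import Order.TTheory GRing.Theory Num.Theory.
Local Open Scope classical_set_scope.
Local Open Scope ring_scope.

Section Defs.
Variable R : realType.

Definition leb2 := ((@lebesgue_measure R) \x (@lebesgue_measure R))%E.
Definition leb3 := (leb2 \x (@lebesgue_measure R))%E.

(* n-dimensional Lebesgue volume of a set of column vectors, for n in {2,3}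
   (set to 0 for other n, never used). *)
Definition Vol (n : nat) : set 'cV[R]_n -> \bar R :=
  match n return set 'cV[R]_n -> \bar R with
  | 2 => fun S => leb2 [set p : R * R | S (\col_(i < 2) [:: p.1; p.2]`_i)]
  | 3 => fun S => leb3 [set p : (R * R) * R |
                         S (\col_(i < 3) [:: p.1.1; p.1.2; p.2]`_i)]
  | _ => fun _ => 0%E
  end.

(* Vertices of the parallelotope {c + sum_j lambda_j G_j : lambda in [0,1]^k}
   (G_j the j-th column of G), indexed by lambda in {0,1}^k. *)
Definition ptope_vertex (m k : nat) (c : 'cV[R]_m) (G : 'M[R]_(m, k))
  (l : {ffun 'I_k -> bool}) : 'cV[R]_m :=
  c + \sum_(j < k) (l j)%:R *: col j G.

Definition vmin (m k : nat) (vert : {ffun 'I_k -> bool} -> 'cV[R]_m) (i : 'I_m) : R :=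
  \big[Num.min/vert [ffun=> false] i ord0]_(l : {ffun 'I_k -> bool}) vert l i ord0.
Definition vmax (m k : nat) (vert : {ffun 'I_k -> bool} -> 'cV[R]_m) (i : 'I_m) : R :=
  \big[Num.max/vert [ffun=> false] i ord0]_(l : {ffun 'I_k -> bool}) vert l i ord0.
Definition bbox (m k : nat) (vert : {ffun 'I_k -> bool} -> 'cV[R]_m) : set 'cV[R]_m :=
  [set y | forall i : 'I_m, vmin vert i <= y i ord0 <= vmax vert i].

(* U^L_r / U^R_r generators: first column u_1 (index ord0) scaled by s. *)
Definition scale_first (k : nat) (U : 'M[R]_k.+1) (s : R) : 'M[R]_k.+1 :=
  \matrix_(i, j) (if j == ord0 then s * U i j else U i j).

Definition img_vertex (nout k : nat) (W : 'M[R]_(nout, k)) (b : 'cV[R]_nout)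
  (c : 'cV[R]_k) (G : 'M[R]_k) (l : {ffun 'I_k -> bool}) : 'cV[R]_nout :=
  W *m ptope_vertex c G l + b.

Definition Vred (nout k : nat) (W : 'M[R]_(nout, k.+1)) (b : 'cV[R]_nout)
  (c : 'cV[R]_k.+1) (U : 'M[R]_k.+1) (r : R) : \bar R :=
  (Vol (bbox (img_vertex W b c U))
   - Vol (bbox (img_vertex W b c (scale_first U r))
          `|` bbox (img_vertex W b (c + r *: col ord0 U) (scale_first U (1 - r)))))%E.

End Defs.

(* The image of a parallelotope with offset c and generators G under x |-> W x + b has
   bounding box (W c + b)_i + sum_j [min(0, (W G)_ij), max(0, (W G)_ij)] along coordinate i.
   Writing a = W u_1 and S_i for the width contributed by u_2, ..., u_n, the boxes of the
   two halves cut at r have widths S_i + r |a_i| and S_i + (1 - r) |a_i| and meet exactly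
   in the box of the cut itself, of widths S_i.  Inclusion-exclusion then gives
   V_red(r) = P(1) - P(r) - P(1 - r) + P(0) with P(s) = prod_i (S_i + s |a_i|), and
   P(r) + P(1 - r) >= 2 P(1/2) because the factors of P(r) and P(1 - r), and their partial
   products, are ordered the same way (Chebyshev's sum inequality, one factor at a time). *)

From HB Require Import structures.
From mathcomp Require Import all_boot all_order all_algebra.
From mathcomp Require Import all_classical all_reals all_analysis.
From mathcomp Require Import ring lra.
Set Implicit Arguments. Unset Strict Implicit. Unset Printing Implicit Defensive.
Import Order.TTheory GRing.Theory Num.Theory.
Local Open Scope ring_scope.
Local Open Scope classical_set_scope.

Section AffineProduct.
Variables (R : realFieldType) (I : Type) (S a : I -> R).
Hypotheses (S_ge0 : forall i, 0 <= S i) (a_ge0 : forall i, 0 <= a i).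

Lemma prod_affine_le (s : seq I) (x y : R) : 0 <= x <= y ->
  \prod_(i <- s) (S i + x * a i) <= \prod_(i <- s) (S i + y * a i).
Proof.
move=> /andP[x_ge0 le_xy]; apply: ler_prod => i _.
by rewrite addr_ge0 ?mulr_ge0 //= lerD2l ler_wpM2r.
Qed.

Lemma prod_affine_midpoint (s : seq I) (r : R) : 0 <= r <= 1 ->
  2 * \prod_(i <- s) (S i + 1 / 2 * a i)
  <= \prod_(i <- s) (S i + r * a i) + \prod_(i <- s) (S i + (1 - r) * a i).
Proof.
move=> /andP[r_ge0 r_le1]; elim: s => [|i s IHs]; first by rewrite !big_nil; lra.
rewrite !big_cons.
set u := \prod_(j <- s) (S j + r * a j) in IHs *.
set v := \prod_(j <- s) (S j + (1 - r) * a j) in IHs *.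
set m := \prod_(j <- s) (S j + 1 / 2 * a j) in IHs *.
set x := S i + r * a i; set y := S i + (1 - r) * a i; set z := S i + 1 / 2 * a i.
have z_ge0 : 0 <= z by rewrite addr_ge0 ?mulr_ge0.
have similarly_ordered : 0 <= (u - v) * (x - y).
  have [le_r|lt_r] := lerP r (1 - r).
  - apply: mulr_le0; rewrite subr_le0.
    + by apply: prod_affine_le; rewrite r_ge0.
    + by rewrite /x /y lerD2l ler_wpM2r.
  - apply: mulr_ge0; rewrite subr_ge0.
    + by apply: prod_affine_le; rewrite subr_ge0 r_le1 ltW.
    + by rewrite /x /y lerD2l ler_wpM2r // ltW.
have -> : x * u + y * v = z * (u + v) + (u - v) * (x - y) / 2.
  by rewrite /x /y /z; field.
apply: (le_trans (y := z * (u + v))); first by rewrite mulrCA ler_wpM2l.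
by rewrite lerDl divr_ge0.
Qed.

End AffineProduct.

Section Boxes.
Variable R : realType.

Definition box (n : nat) (lo hi : 'I_n -> R) : set 'cV[R]_n :=
  [set y | forall i, lo i <= y i ord0 <= hi i].

Lemma setI_box n (lo1 hi1 lo2 hi2 : 'I_n -> R) :
  box lo1 hi1 `&` box lo2 hi2 =
  box (fun i => Num.max (lo1 i) (lo2 i)) (fun i => Num.min (hi1 i) (hi2 i)).
Proof.
apply/seteqP; split => y.
  move=> [h1 h2] i; move: (h1 i) (h2 i) => /andP[? ?] /andP[? ?].
  by rewrite ge_max le_min; apply/andP; split; apply/andP.
move=> h; split=> i; move: (h i);
  by rewrite ge_max le_min => /andP[/andP[? ?] /andP[? ?]]; apply/andP.
Qed.

Lemma img_vertex_coord n k (W : 'M[R]_(n, k)) b c (G : 'M[R]_k) l i :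
  img_vertex W b c G l i ord0 =
  (W *m c + b) i ord0 + \sum_(j < k) (l j)%:R * (W *m G) i j.
Proof.
rewrite /img_vertex /ptope_vertex mulmxDr mulmx_sumr !mxE summxE addrAC.
congr (_ + _); apply: eq_bigr => j _.
by rewrite -scalemxAr !mxE; congr (_ * _); apply: eq_bigr => m _; rewrite !mxE.
Qed.

Lemma vmin_img_vertex n k (W : 'M[R]_(n, k)) b c (G : 'M[R]_k) i :
  vmin (img_vertex W b c G) i =
  (W *m c + b) i ord0 + \sum_(j < k) Num.min 0 ((W *m G) i j).
Proof.
apply/eqP; rewrite eq_le; apply/andP; split.
  rewrite /vmin (bigD1 [ffun j => (W *m G) i j < 0]) //= ge_min img_vertex_coord lerD2l.
  by rewrite ler_sum // => j _; rewrite ffunE; case: ltrP; rewrite ?mul1r ?mul0r.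
rewrite /vmin; apply: (big_ind (fun v => _ <= v)) => [||l _].
- by rewrite img_vertex_coord lerD2l ler_sum // => j _; rewrite ffunE mul0r ge_min lexx.
- by move=> x y hx hy; rewrite le_min hx hy.
- rewrite img_vertex_coord lerD2l ler_sum // => j _.
  by case: (l j); rewrite ?mul1r ?mul0r ge_min lexx ?orbT.
Qed.

Lemma vmax_img_vertex n k (W : 'M[R]_(n, k)) b c (G : 'M[R]_k) i :
  vmax (img_vertex W b c G) i =
  (W *m c + b) i ord0 + \sum_(j < k) Num.max 0 ((W *m G) i j).
Proof.
apply/eqP; rewrite eq_le; apply/andP; split; last first.
  rewrite /vmax (bigD1 [ffun j => 0 < (W *m G) i j]) //= le_max img_vertex_coord lerD2l.
  by rewrite ler_sum // => j _; rewrite ffunE; case: ltrP; rewrite ?mul1r ?mul0r.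
rewrite /vmax; apply: (big_ind (fun v => v <= _)) => [||l _].
- by rewrite img_vertex_coord lerD2l ler_sum // => j _; rewrite ffunE mul0r le_max lexx.
- by move=> x y hx hy; rewrite ge_max hx hy.
- rewrite img_vertex_coord lerD2l ler_sum // => j _.
  by case: (l j); rewrite ?mul1r ?mul0r le_max lexx ?orbT.
Qed.

Lemma bbox_img_vertex n k (W : 'M[R]_(n, k)) b c (G : 'M[R]_k) :
  bbox (img_vertex W b c G) =
  box (fun i => (W *m c + b) i ord0 + \sum_(j < k) Num.min 0 ((W *m G) i j))
      (fun i => (W *m c + b) i ord0 + \sum_(j < k) Num.max 0 ((W *m G) i j)).
Proof.
by rewrite /bbox (funext (vmin_img_vertex _ _ _ _)) (funext (vmax_img_vertex _ _ _ _)).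
Qed.

End Boxes.

Section BoxVolume.
Variable R : realType.

Definition pair_col (p : R * R) : 'cV[R]_2 := \col_(i < 2) [:: p.1; p.2]`_i.
Definition triple_col (p : R * R * R) : 'cV[R]_3 :=
  \col_(i < 3) [:: p.1.1; p.1.2; p.2]`_i.

Lemma preimage_pair_col_box (lo hi : 'I_2 -> R) :
  let i1 := lift ord0 ord0 in
  pair_col @^-1` box lo hi = `[lo ord0, hi ord0] `*` `[lo i1, hi i1].
Proof.
apply/seteqP; split => -[x y] /=.
  by move=> h; split; rewrite /= in_itv; [have := h ord0 | have := h (lift ord0 ord0)];
    rewrite !mxE.
move=> [hx hy] i; rewrite mxE; move: hx hy; rewrite /= !in_itv.
by case: (unliftP ord0 i) => [j ->|->]; rewrite ?(ord1 j).
Qed.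

Lemma preimage_triple_col_box (lo hi : 'I_3 -> R) :
  let i1 : 'I_3 := lift ord0 ord0 in let i2 : 'I_3 := lift ord0 (lift ord0 ord0) in
  triple_col @^-1` box lo hi =
  `[lo ord0, hi ord0] `*` `[lo i1, hi i1] `*` `[lo i2, hi i2].
Proof.
apply/seteqP; split => -[[x y] z] /=.
  move=> h; split; [split|]; rewrite /= in_itv;
    [have := h ord0 | have := h (lift ord0 ord0) | have := h (lift ord0 (lift ord0 ord0))];
    by rewrite !mxE.
move=> [[hx hy] hz] i; rewrite mxE; move: hx hy hz; rewrite /= !in_itv.
case: (unliftP ord0 i) => [j ->|->] //.
by case: (unliftP ord0 j) => [k ->|->]; rewrite ?(ord1 k).
Qed.

Lemma lebesgue_measure_itv_cc (x y : R) : x <= y ->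
  lebesgue_measure `[x, y] = (y - x)%:E.
Proof.
rewrite le_eqVlt => /predU1P[->|lt_xy]; last by rewrite lebesgue_measure_itv /= lte_fin lt_xy.
by rewrite lebesgue_measure_itv /= ltxx subrr.
Qed.

Lemma leb2_rect (x0 y0 x1 y1 : R) : x0 <= y0 -> x1 <= y1 ->
  leb2 (`[x0, y0] `*` `[x1, y1]) = ((y0 - x0) * (y1 - x1))%:E.
Proof.
move=> le0 le1; rewrite /leb2 product_measure1E ?measurable_itv //.
by rewrite EFinM; congr (_ * _)%E; exact: lebesgue_measure_itv_cc.
Qed.

Lemma Vol_box n (lo hi : 'I_n -> R) : n = 2%N \/ n = 3%N ->
  (forall i, lo i <= hi i) -> Vol (box lo hi) = (\prod_i (hi i - lo i))%:E.
Proof.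
case=> ?; subst n => le_lohi; rewrite !big_ord_recl big_ord0 mulr1.
- by rewrite /Vol -/(pair_col @^-1` box lo hi) preimage_pair_col_box leb2_rect.
- rewrite /Vol -/(triple_col @^-1` box lo hi) preimage_triple_col_box.
  rewrite /leb3 product_measure1E; last 2 first.
  - by apply: measurableX; exact: measurable_itv.
  - exact: measurable_itv.
  rewrite mulrA EFinM; congr (_ * _)%E; [exact: leb2_rect | exact: lebesgue_measure_itv_cc].
Qed.

Lemma Vol_setU_box n (lo1 hi1 lo2 hi2 : 'I_n -> R) : n = 2%N \/ n = 3%N ->
  (forall i, lo1 i <= hi1 i) ->
  Vol (box lo1 hi1 `|` box lo2 hi2) =
  (Vol (box lo1 hi1) + Vol (box lo2 hi2) - Vol (box lo1 hi1 `&` box lo2 hi2))%E.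
Proof.
move=> hn le_lohi1; have Vol_lt_oo : (Vol (box lo1 hi1) < +oo)%E by rewrite Vol_box ?ltry.
case: hn => ? in Vol_lt_oo *; subst n.
- have Vol2E S : Vol S = leb2 (pair_col @^-1` S) by [].
  rewrite !Vol2E preimage_setU preimage_setI /leb2 measureUfinl //;
    try by rewrite preimage_pair_col_box; apply: measurableX; exact: measurable_itv.
- have Vol3E S : Vol S = leb3 (triple_col @^-1` S) by [].
  rewrite !Vol3E preimage_setU preimage_setI /leb3 measureUfinl //;
    try by rewrite preimage_triple_col_box; apply: measurableX; [apply: measurableX|];
      exact: measurable_itv.
Qed.

End BoxVolume.

Section Slices.
Variables (R : realType) (n k : nat).
Variables (W : 'M[R]_(n, k.+1)) (b : 'cV[R]_n) (c : 'cV[R]_k.+1) (U : 'M[R]_k.+1).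

Definition offset_img i := (W *m c + b) i ord0.
Definition first_img i := (W *m U) i ord0.
Definition rest_lo i := \sum_(j < k) Num.min 0 ((W *m U) i (lift ord0 j)).
Definition rest_hi i := \sum_(j < k) Num.max 0 ((W *m U) i (lift ord0 j)).
Definition rest_width i := \sum_(j < k) `|(W *m U) i (lift ord0 j)|.

(* Bounding box of the image of the slice c + t u_1 + [0, s] u_1 + sum_(j >= 2) [0, 1] u_j. *)
Definition slice_lo s t i :=
  offset_img i + t * first_img i + (Num.min 0 (s * first_img i) + rest_lo i).
Definition slice_hi s t i :=
  offset_img i + t * first_img i + (Num.max 0 (s * first_img i) + rest_hi i).

Lemma mul_scale_first s i j : (W *m scale_first U s) i j =
  if j == ord0 then s * (W *m U) i j else (W *m U) i j.
Proof.
rewrite !mxE; under eq_bigr => l _ do rewrite mxE.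
case: eqP => // _; rewrite mulr_sumr.
by apply: eq_bigr => l _; rewrite mulrCA.
Qed.

Lemma shifted_offset_img t i :
  (W *m (c + t *: col ord0 U) + b) i ord0 = offset_img i + t * first_img i.
Proof.
rewrite /offset_img /first_img mulmxDr -scalemxAr !mxE addrAC; congr (_ + _ * _).
by apply: eq_bigr => l _; rewrite mxE.
Qed.

Lemma bbox_slice s t :
  bbox (img_vertex W b (c + t *: col ord0 U) (scale_first U s)) =
  box (slice_lo s t) (slice_hi s t).
Proof.
rewrite bbox_img_vertex; congr box; apply: funext => i;
  rewrite shifted_offset_img big_ord_recl mul_scale_first eqxx;
  by congr (_ + (_ + _)); apply: eq_bigr => j _; rewrite mul_scale_first.
Qed.

Lemma rest_width_ge0 i : 0 <= rest_width i.
Proof. by rewrite sumr_ge0. Qed.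

Lemma slice_width s t i : 0 <= s ->
  slice_hi s t i - slice_lo s t i = rest_width i + s * `|first_img i|.
Proof.
move=> s_ge0; have max_min0 x : Num.max 0 x - Num.min 0 x = `|x| :> R.
  by case: ger0P; rewrite ?subr0 ?sub0r.
have -> : rest_width i = rest_hi i - rest_lo i.
  by rewrite -sumrB; apply: eq_bigr => j _; rewrite max_min0.
have := max_min0 (s * first_img i); rewrite normrM (ger0_norm s_ge0).
rewrite /slice_hi /slice_lo; lra.
Qed.

Lemma slice_lo_le_hi s t i : 0 <= s -> slice_lo s t i <= slice_hi s t i.
Proof.
by move=> s_ge0; rewrite -subr_ge0 slice_width // addr_ge0 ?rest_width_ge0 ?mulr_ge0.
Qed.

Lemma setI_slices r : 0 <= r <= 1 ->
  box (slice_lo r 0) (slice_hi r 0) `&` box (slice_lo (1 - r) r) (slice_hi (1 - r) r) =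
  box (slice_lo 0 r) (slice_hi 0 r).
Proof.
move=> /andP[r_ge0 r_le1]; have r'_ge0 : 0 <= 1 - r by rewrite subr_ge0.
rewrite setI_box; congr box; apply: funext => i;
  rewrite /slice_lo /slice_hi !mul0r ?minxx ?maxxx; set x := first_img i;
  have [x_ge0|x_lt0] := lerP 0 x.
- have [h1 h2] : 0 <= r * x /\ 0 <= (1 - r) * x by rewrite !mulr_ge0.
  by rewrite (min_l h1) (min_l h2) max_r //; lra.
- have [h1 h2] : r * x <= 0 /\ (1 - r) * x <= 0 by rewrite !mulr_ge0_le0 // ltW.
  by rewrite (min_r h1) (min_r h2) max_l //; lra.
- have [h1 h2] : 0 <= r * x /\ 0 <= (1 - r) * x by rewrite !mulr_ge0.
  by rewrite (max_r h1) (max_r h2) min_l //; lra.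
- have [h1 h2] : r * x <= 0 /\ (1 - r) * x <= 0 by rewrite !mulr_ge0_le0 // ltW.
  by rewrite (max_l h1) (max_l h2) min_r //; lra.
Qed.

Definition slice_volume s := \prod_(i < n) (rest_width i + s * `|first_img i|).

Lemma Vol_slice s t : n = 2%N \/ n = 3%N -> 0 <= s ->
  Vol (box (slice_lo s t) (slice_hi s t)) = (slice_volume s)%:E.
Proof.
move=> hn s_ge0; rewrite Vol_box // => [|i]; last exact: slice_lo_le_hi.
by congr EFin; apply: eq_bigr => i _; rewrite slice_width.
Qed.

Lemma Vred_slices r : Vred W b c U r =
  (Vol (box (slice_lo 1 0) (slice_hi 1 0))
   - Vol (box (slice_lo r 0) (slice_hi r 0)
          `|` box (slice_lo (1 - r) r) (slice_hi (1 - r) r)))%E.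
Proof.
have scale_first1 : scale_first U 1 = U.
  by apply/matrixP => i j; rewrite mxE; case: ifP; rewrite ?mul1r.
have shift0 : c = c + 0 *: col ord0 U by rewrite scale0r addr0.
by rewrite /Vred -!bbox_slice scale_first1 -shift0.
Qed.

Lemma Vred_slice_volume r : n = 2%N \/ n = 3%N -> 0 <= r <= 1 ->
  Vred W b c U r =
  (slice_volume 1 - (slice_volume r + slice_volume (1 - r) - slice_volume 0))%:E.
Proof.
move=> hn /andP[r_ge0 r_le1]; have r'_ge0 : 0 <= 1 - r by rewrite subr_ge0.
rewrite Vred_slices Vol_setU_box // => [|i]; last exact: slice_lo_le_hi.
by rewrite setI_slices ?r_ge0 // !Vol_slice // !EFinB EFinD.
Qed.

End Slices.

Theorem corollary2 (R : realType) (nin nout : nat) (hnin : (1 <= nin)%N)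
  (hnout : nout = 2%N \/ nout = 3%N)
  (W : 'M[R]_(nout, nin.-1.+1)) (b : 'cV[R]_nout) (c : 'cV[R]_nin.-1.+1)
  (U : 'M[R]_nin.-1.+1) :
  forall r : R, 0 <= r <= 1 ->
    (Vred W b c U r <= Vred W b c U (1 / 2))%E.
Proof.
move=> r r01; have half01 : 0 <= (1 / 2 : R) <= 1 by lra.
rewrite !Vred_slice_volume // lee_fin (_ : 1 - 1 / 2 = 1 / 2); last by lra.
have := prod_affine_midpoint (rest_width_ge0 W U) (fun i => normr_ge0 (first_img W U i))
  (index_enum 'I_nout) r01.
rewrite /slice_volume; lra.
Qed.
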